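(* Let $\mathbf{S}\subset\mathbb{R}^2$ be the unit circle centered at the origin. Let $0\le \alpha_1<\alpha_2<\alpha_3<\alpha_4< \pi$ and set $A_i=(\cos 2\alpha_i,\sin 2\alpha_i)\in\mathbf{S}$ for $1\le i\le 4$ (so $A_1,A_2,A_3,A_4$ are distinct and arranged counterclockwise). For each $i$, let $H_i$ be a Euclidean circle of radius $r_i$ (with $0<r_i<1$) contained in the closed unit disk and tangent to $\mathbf{S}$ from the inside at $A_i$, and assume $H_i\cap H_j=\varnothing$ for all $i\neq j$. For $1\le i<j\le 4$ define: - $d_{ij}$ = the Euclidean distance between $A_i$ and $A_j$; - $t_{ij}$ = the length of the exterior common tangent segment to $H_i$ and $H_j$ (the common tangent drawn so that both circles lie on the same side of it), measured between the two points of tangency; - $\lambda_{ij}=e^{\delta_{ij}/2}$, where $\delta_{ij}$ is defined as follows: regard the open unit disk as the Poincaré disk model of the hyperbolic plane, with metric $ds^2=4(dx^2+dy^2)/(1-x^2-y^2)^2$, so that $H_i$ is a horocycle centered at the ideal point $A_i$; let $\gamma_{ij}$ be the hyperbolic geodesic with ideal endpoints $A_i$ and $A_j$; then $\delta_{ij}$ is the hyperbolic distance along $\gamma_{ij}$ between the points $H_i\cap\gamma_{ij}$ and $H_j\cap\gamma_{ij}$; - $P_{ij}=\det\begin{bmatrix}\cos\alpha_i & \cos\alpha_j\\ \sin\alpha_i & \sin\alpha_j\end{bmatrix}$. Then for all $1\le i<j\le 4$: $$t_{ij}=\sqrt{1-r_i}\,\sqrt{1-r_j}\,d_{ij},\qquad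 t_{ij}=\lambda_{ij}\sqrt{2r_i}\,\sqrt{2r_j},\qquad d_{ij}=2P_{ij}.$$
   Context: Here $H_i\cap\gamma_{ij}$ denotes the single point where the geodesic $\gamma_{ij}$ (a circular arc or diameter orthogonal to $\mathbf{S}$) meets the horocycle $H_i$ other than the ideal point $A_i$ itself. *)

From Stdlib Require Import Reals Lra.
Open Scope R_scope.

Definition pt := (R * R)%type.

Definition dot (u v : pt) : R := fst u * fst v + snd u * snd v.
Definition psub (u v : pt) : pt := (fst u - fst v, snd u - snd v).
Definition norm (u : pt) : R := sqrt (dot u u).
Definition edist (u v : pt) : R := norm (psub u v).
Definition det2 (u v : pt) : R := fst u * snd v - snd u * fst v.

Definition idealpt (a : R) : pt := (cos (2 * a), sin (2 * a)).

Definition on_circle (c : pt) (r : R) (p : pt) : Prop := edist p c = r.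

(* p, q are the points of tangency of an exterior common tangent line of the
   circles (c1,r1), (c2,r2): the line {x | n.x = b} (n a unit normal) passes
   through p in the first circle and q in the second, and both circles lie in
   the same closed half-plane {x | n.x <= b}. *)
Definition ext_tangent_pts (c1 : pt) (r1 : R) (c2 : pt) (r2 : R) (p q : pt)
  : Prop :=
  exists (n : pt) (b : R),
    dot n n = 1 /\
    on_circle c1 r1 p /\ on_circle c2 r2 q /\
    dot n p = b /\ dot n q = b /\
    (forall x, on_circle c1 r1 x -> dot n x <= b) /\
    (forall x, on_circle c2 r2 x -> dot n x <= b).

(* Points of the hyperbolic geodesic (Poincare disk) with ideal endpoints A, B:
   points of the open unit disk lying either on a Euclidean circle through A, B
   orthogonal to the unit circle, or (when A, B are antipodal) on the diameter AB. *)
Definition on_geodesic (A B : pt) (x : pt) : Prop :=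
  dot x x < 1 /\
  ((exists c : pt,
      edist c A = edist c B /\ dot c c = 1 + (edist c A) ^ 2 /\
      edist x c = edist c A)
   \/ (fst A + fst B = 0 /\ snd A + snd B = 0 /\ det2 x A = 0)).

Definition arcosh (x : R) : R := ln (x + sqrt (x ^ 2 - 1)).

(* Hyperbolic distance in the Poincare disk model with metric
   ds^2 = 4 (dx^2 + dy^2) / (1 - x^2 - y^2)^2. *)
Definition hdist (u v : pt) : R :=
  arcosh (1 + 2 * (edist u v) ^ 2 / ((1 - dot u u) * (1 - dot v v))).

(** A horocycle of Euclidean radius r tangent to the unit circle at A has centre (1 - r) A,
    so the centres of H_i and H_j are at squared distance
    (r_i - r_j)^2 + (1 - r_i)(1 - r_j) d_ij^2, while the exterior common tangent has squared
    length |c_i - c_j|^2 - (r_i - r_j)^2 = (1 - r_i)(1 - r_j) d_ij^2.  Everything else is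
    invariant under rotations about the origin.  Rotating A_i to (1, 0) puts A_j at
    (cos 2θ, sin 2θ) with θ = α_j - α_i, so d_ij = 2 sin θ = 2 P_ij; in this frame the geodesic
    γ_ij is the curve cos θ |x - A_i|^2 = 2 sin θ x_2, which meets H_i again at an explicit
    point.  The distance formula of the disk model then gives cosh δ_ij = (L + 1/L) / 2 with
    L = (1 - r_i)(1 - r_j) sin^2 θ / (r_i r_j), i.e. e^δ_ij = L = t_ij^2 / (4 r_i r_j);
    disjointness of H_i and H_j is exactly L > 1. *)

From Stdlib Require Import Reals Lia Lra Psatz.
Open Scope R_scope.

Definition pscale (k : R) (u : pt) : pt := (k * fst u, k * snd u).

Lemma dot_self_nonneg (u : pt) : 0 <= dot u u.
Proof. unfold dot; apply Rplus_le_le_0_compat; apply Rle_0_sqr. Qed.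

Lemma sum_sq_le0 (x y : R) : x ^ 2 + y ^ 2 <= 0 -> x = 0 /\ y = 0.
Proof. intros H; split; nra. Qed.

Lemma edist_sq (u v : pt) :
  edist u v ^ 2 = (fst u - fst v) ^ 2 + (snd u - snd v) ^ 2.
Proof.
  unfold edist, norm; rewrite pow2_sqrt.
  - unfold dot, psub; cbn [fst snd]; ring.
  - apply dot_self_nonneg.
Qed.

Lemma edist_nonneg (u v : pt) : 0 <= edist u v.
Proof. apply sqrt_pos. Qed.

Lemma pow2_inj (x y : R) : 0 <= x -> 0 <= y -> x ^ 2 = y ^ 2 -> x = y.
Proof. intros Hx Hy H; apply Rsqr_inj; [exact Hx | exact Hy |]; now rewrite !Rsqr_pow2. Qed.

Lemma edist_eq_sq (u v : pt) (d : R) : 0 <= d -> edist u v ^ 2 = d ^ 2 -> edist u v = d.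
Proof. apply pow2_inj, edist_nonneg. Qed.

Lemma on_circle_sq (c : pt) (r : R) (p : pt) :
  on_circle c r p -> (fst p - fst c) ^ 2 + (snd p - snd c) ^ 2 = r ^ 2.
Proof. unfold on_circle; intros H; now rewrite <- edist_sq, H. Qed.

Lemma on_circle_of_sq (c : pt) (r : R) (p : pt) : 0 <= r ->
  (fst p - fst c) ^ 2 + (snd p - snd c) ^ 2 = r ^ 2 -> on_circle c r p.
Proof. intros Hr H; apply edist_eq_sq; [exact Hr |]; now rewrite edist_sq. Qed.

Lemma dot_le_of_unit (n w : pt) (r : R) : dot n n = 1 -> dot w w = r ^ 2 -> 0 <= r ->
  dot n w <= r.
Proof.
  destruct n as [n1 n2], w as [w1 w2]; unfold dot; cbn [fst snd]; intros Hn Hw Hr.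
  assert (Lagrange : (n1 * w1 + n2 * w2) ^ 2 + (n1 * w2 - n2 * w1) ^ 2
                     = (n1 * n1 + n2 * n2) * (w1 * w1 + w2 * w2)) by ring.
  rewrite Hn, Hw in Lagrange.
  assert (Hsq : (n1 * w1 + n2 * w2) ^ 2 <= r ^ 2)
    by (pose proof (pow2_ge_0 (n1 * w2 - n2 * w1)); lra).
  nra.
Qed.

Lemma edist_pscale_sq (a b : pt) (k l : R) : dot a a = 1 -> dot b b = 1 ->
  edist (pscale k a) (pscale l b) ^ 2 = (k - l) ^ 2 + k * l * edist a b ^ 2.
Proof.
  destruct a as [a1 a2], b as [b1 b2]; unfold dot, pscale; cbn [fst snd]; intros Ha Hb.
  rewrite !edist_sq; cbn [fst snd].
  transitivity (k ^ 2 * (a1 * a1 + a2 * a2) + l ^ 2 * (b1 * b1 + b2 * b2)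
                - 2 * k * l * (a1 * b1 + a2 * b2)); [ring |].
  transitivity ((k - l) ^ 2 + k * l * ((a1 * a1 + a2 * a2) + (b1 * b1 + b2 * b2)
                                       - 2 * (a1 * b1 + a2 * b2))); [rewrite Ha, Hb; ring | ring].
Qed.

Lemma horocycle_center (a c : pt) (r : R) : dot a a = 1 -> 0 <= r ->
  (forall p, on_circle c r p -> norm p <= 1) -> on_circle c r a ->
  c = pscale (1 - r) a.
Proof.
  destruct a as [a1 a2], c as [c1 c2]; unfold dot, pscale; cbn [fst snd].
  intros Ha Hr Hdisk Hca; apply on_circle_sq in Hca; cbn [fst snd] in Hca.
  (* the disk condition at the point c + r a of the circle gives a.c <= 1 - r *)
  assert (Hfar : norm (c1 + r * a1, c2 + r * a2) <= 1).
  { apply Hdisk, on_circle_of_sq; [exact Hr|]; cbn [fst snd].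
    transitivity (r ^ 2 * (a1 * a1 + a2 * a2)); [ring | rewrite Ha; ring]. }
  clear Hdisk; unfold norm in Hfar; rewrite <- sqrt_1 in Hfar.
  apply sqrt_le_0 in Hfar; [| apply dot_self_nonneg | lra].
  unfold dot in Hfar; cbn [fst snd] in Hfar.
  set (ac := a1 * c1 + a2 * c2) in *.
  assert (Efar : (c1 + r * a1) * (c1 + r * a1) + (c2 + r * a2) * (c2 + r * a2)
                 = ((a1 - c1) ^ 2 + (a2 - c2) ^ 2) - (a1 * a1 + a2 * a2)
                   + 2 * (1 + r) * ac + r ^ 2 * (a1 * a1 + a2 * a2)) by (unfold ac; ring).
  rewrite Hca, Ha in Efar.
  assert (Hac : ac <= 1 - r).
  { apply (Rmult_le_reg_l (2 * (1 + r))); nra. }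
  assert (Hzero : (c1 - (1 - r) * a1) ^ 2 + (c2 - (1 - r) * a2) ^ 2 <= 0).
  { replace ((c1 - (1 - r) * a1) ^ 2 + (c2 - (1 - r) * a2) ^ 2)
      with (((a1 - c1) ^ 2 + (a2 - c2) ^ 2) - r ^ 2
            + (2 * r - r ^ 2) * (1 - (a1 * a1 + a2 * a2)) - 2 * r * (1 - r - ac))
      by (unfold ac; ring).
    rewrite Hca, Ha; pose proof (Rmult_le_pos r (1 - r - ac) Hr ltac:(lra)); lra. }
  apply sum_sq_le0 in Hzero; f_equal; lra.
Qed.

(** * Circles and their exterior common tangents *)

Lemma exists_vector_dot_norm (D : pt) (a m : R) : 0 < dot D D -> a ^ 2 <= m * dot D D ->
  exists w, dot w D = a /\ dot w w = m.
Proof.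
  destruct D as [D1 D2]; unfold dot; cbn [fst snd]; intros HL Ham.
  remember (D1 * D1 + D2 * D2) as L eqn:EL.
  assert (Hh : sqrt (m * L - a ^ 2) ^ 2 = m * L - a ^ 2) by (apply pow2_sqrt; lra).
  set (h := sqrt (m * L - a ^ 2)) in *; clearbody h.
  exists ((a * D1 - h * D2) / L, (a * D2 + h * D1) / L); cbn [fst snd]; split.
  - transitivity (a * L / L); [rewrite EL; field | field]; lra.
  - transitivity ((a ^ 2 + h ^ 2) * L / (L * L)); [rewrite EL; field | rewrite Hh; field]; lra.
Qed.

Lemma supporting_line_contact (c n p : pt) (r b : R) : 0 < r -> dot n n = 1 ->
  on_circle c r p -> dot n p = b -> (forall x, on_circle c r x -> dot n x <= b) ->
  p = (fst c + r * fst n, snd c + r * snd n) /\ b = dot n c + r.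
Proof.
  destruct c as [c1 c2], n as [n1 n2], p as [p1 p2]; unfold dot; cbn [fst snd].
  intros Hr Hn Hp Hb Hside.
  assert (Hcontact : n1 * (c1 + r * n1) + n2 * (c2 + r * n2) <= b).
  { apply (Hside (c1 + r * n1, c2 + r * n2)), on_circle_of_sq; [lra |]; cbn [fst snd].
    transitivity (r ^ 2 * (n1 * n1 + n2 * n2)); [ring | rewrite Hn; ring]. }
  apply on_circle_sq in Hp; cbn [fst snd] in Hp.
  assert (Hcs : n1 * (p1 - c1) + n2 * (p2 - c2) <= r).
  { apply (dot_le_of_unit (n1, n2) (p1 - c1, p2 - c2)); unfold dot; cbn [fst snd];
      [exact Hn | rewrite <- Hp; ring | lra]. }
  assert (Hbc : b = n1 * c1 + n2 * c2 + r).
  { replace (n1 * (c1 + r * n1) + n2 * (c2 + r * n2))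
      with (n1 * c1 + n2 * c2 + r * (n1 * n1 + n2 * n2)) in Hcontact by ring.
    rewrite Hn in Hcontact; lra. }
  split; [| exact Hbc].
  assert (Hzero : (p1 - (c1 + r * n1)) ^ 2 + (p2 - (c2 + r * n2)) ^ 2 <= 0).
  { replace ((p1 - (c1 + r * n1)) ^ 2 + (p2 - (c2 + r * n2)) ^ 2)
      with (((p1 - c1) ^ 2 + (p2 - c2) ^ 2) + r ^ 2 * (n1 * n1 + n2 * n2)
            - 2 * r * (n1 * (p1 - c1) + n2 * (p2 - c2))) by ring.
    rewrite Hp, Hn; nra. }
  apply sum_sq_le0 in Hzero; f_equal; lra.
Qed.

Lemma ext_tangent_pts_edist (c1 c2 p q : pt) (r1 r2 : R) : 0 < r1 -> 0 < r2 ->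
  ext_tangent_pts c1 r1 c2 r2 p q -> edist p q ^ 2 = edist c1 c2 ^ 2 - (r1 - r2) ^ 2.
Proof.
  intros Hr1 Hr2 [n [b [Hn [Hp [Hq [Hpb [Hqb [Hside1 Hside2]]]]]]]].
  destruct (supporting_line_contact c1 n p r1 b) as [-> Hb1]; auto.
  destruct (supporting_line_contact c2 n q r2 b) as [-> Hb2]; auto.
  destruct c1 as [c11 c12], c2 as [c21 c22], n as [n1 n2].
  unfold dot in *; cbn [fst snd] in *; rewrite !edist_sq; cbn [fst snd].
  replace ((c11 + r1 * n1 - (c21 + r2 * n1)) ^ 2 + (c12 + r1 * n2 - (c22 + r2 * n2)) ^ 2)
    with ((c11 - c21) ^ 2 + (c12 - c22) ^ 2 + (r1 - r2) ^ 2 * (n1 * n1 + n2 * n2)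
          + 2 * (r1 - r2) * (n1 * c11 + n2 * c12 - (n1 * c21 + n2 * c22))) by ring.
  rewrite Hn; replace (n1 * c11 + n2 * c12 - (n1 * c21 + n2 * c22)) with (r2 - r1) by lra.
  ring.
Qed.

Lemma ext_tangent_pts_exist (c1 c2 : pt) (r1 r2 : R) : 0 < r1 -> 0 < r2 ->
  (r1 - r2) ^ 2 < edist c1 c2 ^ 2 -> exists p q, ext_tangent_pts c1 r1 c2 r2 p q.
Proof.
  intros Hr1 Hr2 Hsep.
  assert (HL : edist c1 c2 ^ 2 = dot (psub c1 c2) (psub c1 c2)).
  { unfold edist, norm; apply pow2_sqrt, dot_self_nonneg. }
  (* the unit normal n of the tangent line satisfies n.(c1 - c2) = r2 - r1 *)
  destruct (exists_vector_dot_norm (psub c1 c2) (r2 - r1) 1) as [[n1 n2] [HnD Hn]];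
    [rewrite <- HL; pose proof (pow2_ge_0 (r1 - r2)); lra | rewrite <- HL; nra |].
  destruct c1 as [c11 c12], c2 as [c21 c22].
  unfold dot, psub in *; cbn [fst snd] in *.
  exists (c11 + r1 * n1, c12 + r1 * n2), (c21 + r2 * n1, c22 + r2 * n2),
    (n1, n2), (n1 * c11 + n2 * c12 + r1).
  assert (Hon : forall c1 c2 r, 0 < r -> on_circle (c1, c2) r (c1 + r * n1, c2 + r * n2)).
  { intros; apply on_circle_of_sq; [lra |]; cbn [fst snd].
    transitivity (r ^ 2 * (n1 * n1 + n2 * n2)); [ring | rewrite Hn; ring]. }
  assert (Hbelow : forall c1 c2 r x, 0 < r -> on_circle (c1, c2) r x ->
                     dot (n1, n2) x <= n1 * c1 + n2 * c2 + r).
  { intros d1 d2 r [x1 x2] Hr Hx; apply on_circle_sq in Hx; unfold dot; cbn [fst snd] in *.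
    enough (n1 * (x1 - d1) + n2 * (x2 - d2) <= r) by lra.
    apply (dot_le_of_unit (n1, n2) (x1 - d1, x2 - d2)); unfold dot; cbn [fst snd];
      [exact Hn | rewrite <- Hx; ring | lra]. }
  unfold dot; cbn [fst snd].
  repeat split; auto.
  - transitivity (n1 * c11 + n2 * c12 + r1 * (n1 * n1 + n2 * n2)); [ring | rewrite Hn; ring].
  - transitivity (n1 * c11 + n2 * c12 - (n1 * (c11 - c21) + n2 * (c12 - c22))
                  + r2 * (n1 * n1 + n2 * n2)); [ring | rewrite Hn; lra].
  - intros x Hx; apply Hbelow; auto.
  - intros x Hx; apply (Rle_trans _ _ _ (Hbelow _ _ _ x Hr2 Hx)); lra.
Qed.

Lemma circles_meet (c1 c2 : pt) (r1 r2 : R) : 0 < r1 -> 0 < r2 ->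
  (r1 - r2) ^ 2 < edist c1 c2 ^ 2 <= (r1 + r2) ^ 2 ->
  exists p, on_circle c1 r1 p /\ on_circle c2 r2 p.
Proof.
  intros Hr1 Hr2 Hsep.
  assert (HL : edist c1 c2 ^ 2 = dot (psub c2 c1) (psub c2 c1)).
  { rewrite edist_sq; unfold dot, psub; cbn [fst snd]; ring. }
  assert (HL0 : 0 < edist c1 c2 ^ 2) by (pose proof (pow2_ge_0 (r1 - r2)); lra).
  set (L := edist c1 c2 ^ 2) in *; clearbody L.
  (* the common point is c1 + w, where |w - (c2 - c1)| = r2 fixes w.(c2 - c1) *)
  set (a := (L + r1 ^ 2 - r2 ^ 2) / 2).
  destruct (exists_vector_dot_norm (psub c2 c1) a (r1 ^ 2)) as [[w1 w2] [HwD Hw]];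
    [rewrite <- HL; lra | | ].
  { rewrite <- HL; unfold a.
    replace (((L + r1 ^ 2 - r2 ^ 2) / 2) ^ 2)
      with (r1 ^ 2 * L + (L - (r1 + r2) ^ 2) * (L - (r1 - r2) ^ 2) / 4) by field.
    nra. }
  destruct c1 as [c11 c12], c2 as [c21 c22].
  unfold dot, psub in *; cbn [fst snd] in *.
  exists (c11 + w1, c12 + w2); split; apply on_circle_of_sq; cbn [fst snd]; try lra.
  transitivity (w1 * w1 + w2 * w2 - 2 * (w1 * (c21 - c11) + w2 * (c22 - c12)) + L);
    [rewrite HL; ring | rewrite Hw, HwD; unfold a; field].
Qed.

Lemma tangent_length_horocycles (A B p q : pt) (ri rj : R) : dot A A = 1 -> dot B B = 1 ->
  0 < ri < 1 -> 0 < rj < 1 ->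
  ext_tangent_pts (pscale (1 - ri) A) ri (pscale (1 - rj) B) rj p q ->
  edist p q = sqrt (1 - ri) * sqrt (1 - rj) * edist A B.
Proof.
  intros HA HB Hri Hrj Hpq; apply edist_eq_sq.
  - apply Rmult_le_pos; [apply Rmult_le_pos; apply sqrt_pos | apply edist_nonneg].
  - rewrite (ext_tangent_pts_edist _ _ _ _ ri rj ltac:(lra) ltac:(lra) Hpq).
    rewrite edist_pscale_sq, !Rpow_mult_distr, !pow2_sqrt by (assumption || lra); ring.
Qed.

Lemma disjoint_horocycles_edist (A B : pt) (ri rj : R) : dot A A = 1 -> dot B B = 1 ->
  0 < ri < 1 -> 0 < rj < 1 -> 0 < edist A B ->
  ~ (exists p, on_circle (pscale (1 - ri) A) ri p /\ on_circle (pscale (1 - rj) B) rj p) ->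
  4 * ri * rj < (1 - ri) * (1 - rj) * edist A B ^ 2.
Proof.
  intros HA HB Hri Hrj HAB Hdisj.
  apply Rnot_le_lt; intros Hle; apply Hdisj, circles_meet; [lra | lra |].
  rewrite edist_pscale_sq by assumption.
  assert (0 < (1 - ri) * (1 - rj) * edist A B ^ 2)
    by (apply Rmult_lt_0_compat; [nra | apply pow_lt; lra]).
  lra.
Qed.

(** * Rotations about the origin *)

(* The complex product a x: a rotation about the origin when a is a unit vector. *)
Definition rot (a x : pt) : pt :=
  (fst a * fst x - snd a * snd x, snd a * fst x + fst a * snd x).

Definition pconj (a : pt) : pt := (fst a, - snd a).

Lemma dot_rot (a x y : pt) : dot (rot a x) (rot a y) = dot a a * dot x y.
Proof. unfold dot, rot; cbn [fst snd]; ring. Qed.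

Lemma det2_rot (a x y : pt) : det2 (rot a x) (rot a y) = dot a a * det2 x y.
Proof. unfold det2, dot, rot; cbn [fst snd]; ring. Qed.

Lemma psub_rot (a x y : pt) : psub (rot a x) (rot a y) = rot a (psub x y).
Proof. unfold psub, rot; cbn [fst snd]; f_equal; ring. Qed.

Lemma rot_rot (a b x : pt) : rot a (rot b x) = rot (rot a b) x.
Proof. unfold rot; cbn [fst snd]; f_equal; ring. Qed.

Lemma rot_pscale (a x : pt) (k : R) : rot a (pscale k x) = pscale k (rot a x).
Proof. unfold rot, pscale; cbn [fst snd]; f_equal; ring. Qed.

Lemma rot1l (x : pt) : rot (1, 0) x = x.
Proof. destruct x; unfold rot; cbn [fst snd]; f_equal; ring. Qed.

Lemma rot1r (a : pt) : rot a (1, 0) = a.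
Proof. destruct a; unfold rot; cbn [fst snd]; f_equal; ring. Qed.

Lemma rot_pconj (a : pt) : dot a a = 1 -> rot (pconj a) a = (1, 0).
Proof. unfold dot, rot, pconj; cbn [fst snd]; intros Ha; f_equal; lra. Qed.

Lemma rot_pconjK (a x : pt) : dot a a = 1 -> rot a (rot (pconj a) x) = x.
Proof.
  intros Ha; rewrite rot_rot.
  replace (rot a (pconj a)) with (rot (pconj a) a) by (unfold rot, pconj; f_equal; cbn; ring).
  now rewrite rot_pconj, rot1l.
Qed.

Lemma dot_pconj (a : pt) : dot (pconj a) (pconj a) = dot a a.
Proof. unfold dot, pconj; cbn [fst snd]; ring. Qed.

Lemma edist_rot (a x y : pt) : dot a a = 1 -> edist (rot a x) (rot a y) = edist x y.
Proof. intros Ha; unfold edist, norm; now rewrite psub_rot, dot_rot, Ha, Rmult_1_l. Qed.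

Lemma on_circle_rot (a c x : pt) (r : R) : dot a a = 1 ->
  on_circle c r x -> on_circle (rot a c) r (rot a x).
Proof. unfold on_circle; intros Ha; now rewrite edist_rot. Qed.

Lemma on_geodesic_rot (a A B x : pt) : dot a a = 1 ->
  on_geodesic A B x -> on_geodesic (rot a A) (rot a B) (rot a x).
Proof.
  intros Ha [Hx Hg]; split; [now rewrite dot_rot, Ha, Rmult_1_l |].
  destruct Hg as [[c Hc] | [HAB1 [HAB2 HxA]]].
  - left; exists (rot a c); now rewrite !edist_rot, dot_rot, Ha, Rmult_1_l.
  - right; rewrite det2_rot, HxA, Rmult_0_r; unfold rot; cbn [fst snd].
    split; [| split; [| reflexivity]].
    + transitivity (fst a * (fst A + fst B) - snd a * (snd A + snd B)); [ring |].
      rewrite HAB1, HAB2; ring.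
    + transitivity (snd a * (fst A + fst B) + fst a * (snd A + snd B)); [ring |].
      rewrite HAB1, HAB2; ring.
Qed.

Lemma on_geodesic_sym (A B x : pt) : on_geodesic A B x -> on_geodesic B A x.
Proof.
  intros [Hx [[c [HcAB Hc]] | [HAB1 [HAB2 HxA]]]]; split; auto.
  - left; exists c; now rewrite <- HcAB.
  - right; repeat split; [lra | lra |].
    destruct A as [A1 A2], B as [B1 B2], x as [x1 x2]; unfold det2 in *; cbn [fst snd] in *.
    replace B1 with (- A1) by lra; replace B2 with (- A2) by lra; lra.
Qed.

Lemma hdist_rot (a x y : pt) : dot a a = 1 -> hdist (rot a x) (rot a y) = hdist x y.
Proof. intros Ha; unfold hdist; now rewrite edist_rot, !dot_rot, Ha, !Rmult_1_l. Qed.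

Lemma idealpt_unit (a : R) : dot (idealpt a) (idealpt a) = 1.
Proof. unfold dot, idealpt; cbn [fst snd]; rewrite Rplus_comm; apply sin2_cos2. Qed.

Lemma rot_idealpt (a b : R) : rot (idealpt a) (idealpt b) = idealpt (a + b).
Proof.
  unfold rot, idealpt; cbn [fst snd].
  replace (2 * (a + b)) with (2 * a + 2 * b) by ring; rewrite cos_plus, sin_plus.
  f_equal; ring.
Qed.

Lemma pconj_idealpt (a : R) : pconj (idealpt a) = idealpt (- a).
Proof.
  unfold pconj, idealpt; cbn [fst snd].
  replace (2 * - a) with (- (2 * a)) by ring; now rewrite cos_neg, sin_neg.
Qed.

Lemma edist_idealpt (a b : R) : edist (idealpt a) (idealpt b) = 2 * Rabs (sin (b - a)).
Proof.
  replace (idealpt b) with (rot (idealpt a) (idealpt (b - a)))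
    by (rewrite rot_idealpt; f_equal; ring).
  rewrite <- (rot1r (idealpt a)) at 1; rewrite edist_rot by apply idealpt_unit.
  apply edist_eq_sq; [pose proof (Rabs_pos (sin (b - a))); lra |].
  rewrite edist_sq, Rpow_mult_distr, pow2_abs; unfold idealpt; cbn [fst snd].
  rewrite cos_2a_sin, sin_2a; pose proof (sin2_cos2 (b - a)) as H; unfold Rsqr in H.
  transitivity (4 * sin (b - a) ^ 2 * (sin (b - a) * sin (b - a) + cos (b - a) * cos (b - a)));
    [ring | rewrite H; ring].
Qed.

(** * Where a horocycle meets a geodesic *)

Lemma on_geodesic_frame (θ u v : R) : sin θ <> 0 ->
  on_geodesic (1, 0) (idealpt θ) (u, v) <->
  u ^ 2 + v ^ 2 < 1 /\ cos θ * ((u - 1) ^ 2 + v ^ 2) = 2 * sin θ * v.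
Proof.
  intros HP; unfold on_geodesic, idealpt, dot, det2; cbn [fst snd].
  rewrite cos_2a_sin, sin_2a.
  pose proof (sin2_cos2 θ) as HPC; unfold Rsqr in HPC.
  set (P := sin θ) in *; set (C := cos θ) in *; clearbody P C.
  split.
  - intros [Hx [[[k1 k2] [HAB [Hk Hxk]]] | [HAB1 [HAB2 HxA]]]]; split; try lra.
    + apply (f_equal (fun t => t ^ 2)) in HAB, Hxk.
      rewrite !edist_sq in HAB; rewrite !edist_sq in Hk; rewrite !edist_sq in Hxk.
      cbn [fst snd] in HAB, Hk, Hxk.
      assert (Hk1 : k1 = 1) by lra; subst k1.
      assert (Hnorm : (1 - (1 - 2 * P * P)) ^ 2 + (k2 - 2 * P * C) ^ 2 - k2 ^ 2
                      = 4 * P * (P * (P * P + C * C) - C * k2)) by ring.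
      rewrite HPC in Hnorm.
      assert (HkC : C * k2 = P).
      { apply (Rmult_eq_reg_l (4 * P)); [lra | contradict HP; lra]. }
      replace ((u - 1) ^ 2 + v ^ 2) with (2 * k2 * v) by lra.
      rewrite <- HkC; ring.
    + assert (HC : C = 0) by nra.
      replace v with 0 by lra; rewrite HC; ring.
  - intros [Hx Hg]; split; [lra |].
    destruct (Req_dec C 0) as [HC | HC].
    + right; subst C.
      assert (Hv : v = 0) by (apply (Rmult_eq_reg_l (2 * P)); [lra | contradict HP; lra]).
      subst v; repeat split; lra.
    + (* the circle orthogonal to the unit circle at (1, 0) with centre (1, tan θ) *)
      left; exists (1, P / C).
      assert (HcA : edist (1, P / C) (1, 0) ^ 2 = (P / C) ^ 2)
        by (rewrite edist_sq; cbn [fst snd]; ring).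
      repeat split.
      * apply edist_eq_sq; [apply edist_nonneg |]; rewrite HcA, edist_sq; cbn [fst snd].
        transitivity ((P / C) ^ 2 + 4 * P * P * (P * P + C * C - 1));
          [rewrite HPC; ring | field; exact HC].
      * cbn [fst snd]; rewrite HcA; ring.
      * apply edist_eq_sq; [apply edist_nonneg |]; rewrite HcA, edist_sq; cbn [fst snd].
        apply (Rmult_eq_reg_l C); [| exact HC].
        transitivity (C * ((u - 1) ^ 2 + v ^ 2) - 2 * P * v + (P / C) ^ 2 * C);
          [field; exact HC | rewrite Hg; ring].
Qed.

(* The second intersection of the horocycle of radius r at (1, 0) with the geodesic from
   (1, 0) to idealpt θ (see horofoot_frame). *)
Definition horofoot (θ r : R) : pt :=
  let Q := sin θ ^ 2 + r ^ 2 * cos θ ^ 2 in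
  (1 - 2 * r * sin θ ^ 2 / Q, 2 * r ^ 2 * sin θ * cos θ / Q).

Lemma horofoot_denom_pos (θ r : R) : sin θ <> 0 -> 0 < sin θ ^ 2 + r ^ 2 * cos θ ^ 2.
Proof.
  intros HP; pose proof (Rsqr_pos_lt _ HP) as HP2; rewrite Rsqr_pow2 in HP2.
  pose proof (pow2_ge_0 (r * cos θ)); nra.
Qed.

Lemma horofoot_dot (θ r : R) : sin θ <> 0 ->
  1 - dot (horofoot θ r) (horofoot θ r)
  = 4 * r * (1 - r) * sin θ ^ 2 / (sin θ ^ 2 + r ^ 2 * cos θ ^ 2).
Proof.
  intros HP; pose proof (horofoot_denom_pos θ r HP).
  unfold horofoot, dot; cbn [fst snd]; field; lra.
Qed.

Lemma horofoot_unique (θ r u v : R) : sin θ <> 0 -> 0 < r < 1 -> u ^ 2 + v ^ 2 < 1 ->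
  (u - (1 - r)) ^ 2 + v ^ 2 = r ^ 2 -> cos θ * ((u - 1) ^ 2 + v ^ 2) = 2 * sin θ * v ->
  (u, v) = horofoot θ r.
Proof.
  intros HP Hr Hx Hc Hg; pose proof (horofoot_denom_pos θ r HP) as HQ; unfold horofoot.
  set (P := sin θ) in *; set (C := cos θ) in *; clearbody P C.
  remember (P ^ 2 + r ^ 2 * C ^ 2) as Q eqn:EQ.
  (* the common chord of the two circles through (1, 0) *)
  assert (Hlin : r * C * (u - 1) + P * v = 0).
  { replace ((u - 1) ^ 2 + v ^ 2) with (- 2 * r * (u - 1)) in Hg by lra; lra. }
  assert (Hw : (u - 1) * (Q * (u - 1) + 2 * r * P ^ 2) = 0).
  { rewrite EQ.
    transitivity (P ^ 2 * ((u - (1 - r)) ^ 2 + v ^ 2 - r ^ 2)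
                  + (r * C * (u - 1) - P * v) * (r * C * (u - 1) + P * v)); [ring |].
    rewrite Hc, Hlin; ring. }
  assert (Hu1 : u - 1 <> 0).
  { intros Hu; rewrite Hu in Hlin.
    assert (v = 0) by (apply (Rmult_eq_reg_l P); [lra | exact HP]).
    replace u with 1 in Hx by lra; subst v; lra. }
  assert (Hu : Q * (u - 1) = - (2 * r * P ^ 2)).
  { destruct (Rmult_integral _ _ Hw); [contradiction | lra]. }
  f_equal.
  - apply (Rmult_eq_reg_l Q); [| lra].
    transitivity (Q - 2 * r * P ^ 2); [lra | field; lra].
  - apply (Rmult_eq_reg_l (P * Q));
      [| apply Rmult_integral_contrapositive; split; [exact HP | lra]].
    replace (P * Q * v) with (- r * C * (Q * (u - 1))).
    + rewrite Hu; field; lra.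
    + transitivity (- Q * (r * C * (u - 1))); [ring |].
      replace (r * C * (u - 1)) with (- (P * v)) by lra; ring.
Qed.

Lemma horofoot_frame (θ r : R) (x : pt) : sin θ <> 0 -> 0 < r < 1 ->
  on_circle (1 - r, 0) r x /\ on_geodesic (1, 0) (idealpt θ) x <-> x = horofoot θ r.
Proof.
  intros HP Hr; pose proof (horofoot_denom_pos θ r HP) as HQ; split.
  - destruct x as [u v]; rewrite on_geodesic_frame by exact HP.
    intros [Hc [Hx Hg]]; apply on_circle_sq in Hc; cbn [fst snd] in Hc.
    apply horofoot_unique; auto; lra.
  - intros ->; pose proof (horofoot_dot θ r HP) as Hdot.
    unfold horofoot, dot in *; cbv zeta in *; cbn [fst snd] in Hdot.
    rewrite on_geodesic_frame by exact HP; split; [| split].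
    + apply on_circle_of_sq; [lra |]; cbn [fst snd]; field; lra.
    + assert (0 < 4 * r * (1 - r) * sin θ ^ 2 / (sin θ ^ 2 + r ^ 2 * cos θ ^ 2)).
      { apply Rdiv_lt_0_compat; [| exact HQ].
        pose proof (Rsqr_pos_lt _ HP) as HP2; rewrite Rsqr_pow2 in HP2.
        apply Rmult_lt_0_compat; [nra | exact HP2]. }
      lra.
    + field; lra.
Qed.

Lemma horocycle_geodesic_meet (a b r : R) (x : pt) : sin (b - a) <> 0 -> 0 < r < 1 ->
  on_circle (pscale (1 - r) (idealpt a)) r x /\ on_geodesic (idealpt a) (idealpt b) x
  <-> x = rot (idealpt a) (horofoot (b - a) r).
Proof.
  intros Hs Hr.
  pose proof (idealpt_unit a) as HA; pose proof HA as HA'; rewrite <- dot_pconj in HA'.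
  assert (E1 : rot (pconj (idealpt a)) (idealpt a) = (1, 0)) by now apply rot_pconj.
  assert (E2 : rot (pconj (idealpt a)) (idealpt b) = idealpt (b - a))
    by (rewrite pconj_idealpt, rot_idealpt; f_equal; ring).
  assert (E3 : rot (pconj (idealpt a)) (pscale (1 - r) (idealpt a)) = (1 - r, 0))
    by (rewrite rot_pscale, E1; unfold pscale; cbn [fst snd]; f_equal; ring).
  transitivity (rot (pconj (idealpt a)) x = horofoot (b - a) r).
  - rewrite <- horofoot_frame by assumption; rewrite <- E1, <- E2, <- E3; split.
    + intros [Hc Hg]; split; [now apply on_circle_rot | now apply on_geodesic_rot].
    + intros [Hc Hg]; apply (on_circle_rot (idealpt a)) in Hc; [| exact HA].
      apply (on_geodesic_rot (idealpt a)) in Hg; [| exact HA].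
      rewrite !rot_pconjK in Hc by exact HA; rewrite !rot_pconjK in Hg by exact HA.
      now split.
  - split; intros H; [rewrite <- H | rewrite H, rot_rot, E1, rot1l]; auto.
    now rewrite rot_pconjK.
Qed.

(** * The hyperbolic distance between horocycles *)

Lemma edist_horofeet (θ ri rj : R) : sin θ <> 0 ->
  edist (horofoot θ ri) (rot (idealpt θ) (horofoot (- θ) rj)) ^ 2
  = 4 * sin θ ^ 2 * ((1 - ri) * (1 - rj) * sin θ ^ 2 - ri * rj) ^ 2
    / ((sin θ ^ 2 + ri ^ 2 * cos θ ^ 2) * (sin θ ^ 2 + rj ^ 2 * cos θ ^ 2)).
Proof.
  intros HP; pose proof (horofoot_denom_pos θ ri HP) as HQi.
  pose proof (horofoot_denom_pos θ rj HP) as HQj.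
  pose proof (sin2_cos2 θ) as HPC; rewrite !Rsqr_pow2 in HPC.
  rewrite edist_sq; unfold horofoot, rot, idealpt; cbn [fst snd].
  rewrite cos_2a, sin_2a, sin_neg, cos_neg.
  set (P := sin θ) in *; set (C := cos θ) in *; clearbody P C.
  replace ((- P) ^ 2) with (P ^ 2) by ring.
  (* after the rotation, odd powers of C pair up, so that P^2 + C^2 = 1 can be used *)
  transitivity
    ((1 - 2 * ri * P ^ 2 / (P ^ 2 + ri ^ 2 * C ^ 2)
      - (C ^ 2 - P ^ 2) * (1 - 2 * rj * P ^ 2 / (P ^ 2 + rj ^ 2 * C ^ 2))
      - 4 * rj ^ 2 * P ^ 2 * C ^ 2 / (P ^ 2 + rj ^ 2 * C ^ 2)) ^ 2
     + P ^ 2 * C ^ 2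
       * (2 * ri ^ 2 / (P ^ 2 + ri ^ 2 * C ^ 2)
          - 2 * (1 - 2 * rj * P ^ 2 / (P ^ 2 + rj ^ 2 * C ^ 2))
          + 2 * (C ^ 2 - P ^ 2) * rj ^ 2 / (P ^ 2 + rj ^ 2 * C ^ 2)) ^ 2).
  { field; split; lra. }
  replace (C ^ 2) with (1 - P ^ 2) in * by lra.
  field; split; lra.
Qed.

Lemma hdist_horofeet (a b ri rj : R) : sin (b - a) <> 0 -> 0 < ri < 1 -> 0 < rj < 1 ->
  let L := (1 - ri) * (1 - rj) * sin (b - a) ^ 2 / (ri * rj) in
  hdist (rot (idealpt a) (horofoot (b - a) ri)) (rot (idealpt b) (horofoot (a - b) rj))
  = arcosh ((L + / L) / 2).
Proof.
  intros HP Hri Hrj L.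
  replace (idealpt b) with (rot (idealpt a) (idealpt (b - a)))
    by (rewrite rot_idealpt; f_equal; ring).
  replace (a - b) with (- (b - a)) by ring.
  rewrite <- rot_rot, hdist_rot by apply idealpt_unit.
  unfold hdist, L; f_equal.
  assert (HPn : sin (- (b - a)) <> 0) by (rewrite sin_neg; contradict HP; lra).
  rewrite edist_horofeet, dot_rot, idealpt_unit, Rmult_1_l by exact HP.
  rewrite (horofoot_dot _ ri HP), (horofoot_dot _ rj HPn), sin_neg, cos_neg.
  pose proof (horofoot_denom_pos _ ri HP); pose proof (horofoot_denom_pos _ rj HP).
  pose proof (Rsqr_pos_lt _ HP) as HP2; rewrite Rsqr_pow2 in HP2.
  replace ((- sin (b - a)) ^ 2) with (sin (b - a) ^ 2) by ring.
  field; repeat split; lra.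
Qed.

Lemma arcosh_mean_inv (L : R) : 1 <= L -> arcosh ((L + / L) / 2) = ln L.
Proof.
  intros HL; unfold arcosh; f_equal.
  assert (HiL : / L <= 1) by (rewrite <- Rinv_1; apply Rinv_le_contravar; lra).
  replace (((L + / L) / 2) ^ 2 - 1) with (((L - / L) / 2) ^ 2) by (field; lra).
  rewrite sqrt_pow2 by lra; field; lra.
Qed.

Lemma exp_half_ln_sq (L : R) : 0 < L -> exp (ln L / 2) ^ 2 = L.
Proof.
  intros HL; replace (exp (ln L / 2) ^ 2) with (exp (ln L / 2 + ln L / 2))
    by (rewrite exp_plus; ring).
  replace (ln L / 2 + ln L / 2) with (ln L) by field; now apply exp_ln.
Qed.

Lemma exp_half_hdist_horofeet (a b ri rj : R) :
  sin (b - a) <> 0 -> 0 < ri < 1 -> 0 < rj < 1 ->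
  4 * ri * rj <= (1 - ri) * (1 - rj) * edist (idealpt a) (idealpt b) ^ 2 ->
  exp (hdist (rot (idealpt a) (horofoot (b - a) ri)) (rot (idealpt b) (horofoot (a - b) rj)) / 2)
  * sqrt (2 * ri) * sqrt (2 * rj)
  = sqrt (1 - ri) * sqrt (1 - rj) * edist (idealpt a) (idealpt b).
Proof.
  intros Hs Hri Hrj Hsep.
  rewrite edist_idealpt in *; rewrite Rpow_mult_distr, pow2_abs in Hsep.
  rewrite hdist_horofeet by assumption.
  set (L := (1 - ri) * (1 - rj) * sin (b - a) ^ 2 / (ri * rj)).
  assert (HL : 1 <= L).
  { apply (Rmult_le_reg_r (ri * rj)); [nra |].
    replace (L * (ri * rj)) with ((1 - ri) * (1 - rj) * sin (b - a) ^ 2)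
      by (unfold L; field; lra).
    lra. }
  rewrite arcosh_mean_inv by exact HL; apply pow2_inj.
  - apply Rmult_le_pos; [| apply sqrt_pos].
    apply Rmult_le_pos; [left; apply exp_pos | apply sqrt_pos].
  - apply Rmult_le_pos; [apply Rmult_le_pos; apply sqrt_pos |].
    pose proof (Rabs_pos (sin (b - a))); lra.
  - rewrite !Rpow_mult_distr, exp_half_ln_sq, !pow2_sqrt, pow2_abs by lra.
    unfold L; field; lra.
Qed.

Lemma horocycle_pair (a b ri rj : R) : 0 < b - a < PI -> 0 < ri < 1 -> 0 < rj < 1 ->
  let A := idealpt a in let B := idealpt b in
  let Ci := pscale (1 - ri) A in let Cj := pscale (1 - rj) B in
  ~ (exists p, on_circle Ci ri p /\ on_circle Cj rj p) ->
  (exists p q, ext_tangent_pts Ci ri Cj rj p q) /\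
  (exists x y, on_circle Ci ri x /\ on_geodesic A B x /\ on_circle Cj rj y /\ on_geodesic A B y) /\
  (forall p q x y,
     ext_tangent_pts Ci ri Cj rj p q ->
     on_circle Ci ri x -> on_geodesic A B x -> on_circle Cj rj y -> on_geodesic A B y ->
     edist p q = sqrt (1 - ri) * sqrt (1 - rj) * edist A B /\
     edist p q = exp (hdist x y / 2) * sqrt (2 * ri) * sqrt (2 * rj)).
Proof.
  intros Hab Hri Hrj; cbv zeta; intros Hmeet.
  assert (Hs : 0 < sin (b - a)) by (apply sin_gt_0; lra).
  assert (Hs' : sin (a - b) <> 0)
    by (replace (a - b) with (- (b - a)) by ring; rewrite sin_neg; lra).
  assert (HAB : 0 < edist (idealpt a) (idealpt b))
    by (rewrite edist_idealpt, Rabs_pos_eq; lra).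
  pose proof (disjoint_horocycles_edist _ _ ri rj (idealpt_unit a) (idealpt_unit b)
                Hri Hrj HAB Hmeet) as Hsep.
  pose proof (horocycle_geodesic_meet a b ri) as Hfoot_i.
  pose proof (horocycle_geodesic_meet b a rj) as Hfoot_j.
  split; [| split].
  - apply ext_tangent_pts_exist; [lra | lra |].
    rewrite edist_pscale_sq by apply idealpt_unit; nra.
  - exists (rot (idealpt a) (horofoot (b - a) ri)), (rot (idealpt b) (horofoot (a - b) rj)).
    destruct (proj2 (Hfoot_i _ ltac:(lra) Hri) eq_refl) as [Hx Hgx].
    destruct (proj2 (Hfoot_j _ Hs' Hrj) eq_refl) as [Hy Hgy].
    auto using on_geodesic_sym.
  - intros p q x y Hpq Hx Hgx Hy Hgy.
    rewrite (proj1 (Hfoot_i x ltac:(lra) Hri) (conj Hx Hgx)).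
    rewrite (proj1 (Hfoot_j y Hs' Hrj) (conj Hy (on_geodesic_sym _ _ _ Hgy))).
    rewrite exp_half_hdist_horofeet by lra.
    split; apply (tangent_length_horocycles _ _ _ _ ri rj); auto using idealpt_unit.
Qed.

Lemma increasing4_mono (alpha : nat -> R) (i j : nat) :
  alpha 1%nat < alpha 2%nat -> alpha 2%nat < alpha 3%nat -> alpha 3%nat < alpha 4%nat ->
  (1 <= i)%nat -> (i < j)%nat -> (j <= 4)%nat ->
  alpha 1%nat <= alpha i /\ alpha i < alpha j /\ alpha j <= alpha 4%nat.
Proof.
  intros H12 H23 H34 Hi Hij Hj.
  assert (i = 1 \/ i = 2 \/ i = 3)%nat as [-> | [-> | ->]] by lia;
  assert (j = 2 \/ j = 3 \/ j = 4)%nat as [-> | [-> | ->]] by lia;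
  solve [lia | lra].
Qed.

Theorem proposition1 (alpha r : nat -> R) (c : nat -> pt) :
  0 <= alpha 1%nat -> alpha 1%nat < alpha 2%nat -> alpha 2%nat < alpha 3%nat ->
  alpha 3%nat < alpha 4%nat -> alpha 4%nat < PI ->
  (forall i : nat, (1 <= i <= 4)%nat ->
     0 < r i < 1 /\
     (forall p, on_circle (c i) (r i) p -> norm p <= 1) /\
     on_circle (c i) (r i) (idealpt (alpha i))) ->
  (forall i j : nat, (1 <= i <= 4)%nat -> (1 <= j <= 4)%nat -> i <> j ->
     ~ (exists p, on_circle (c i) (r i) p /\ on_circle (c j) (r j) p)) ->
  forall i j : nat, (1 <= i)%nat -> (i < j)%nat -> (j <= 4)%nat ->
    let A_i := idealpt (alpha i) in
    let A_j := idealpt (alpha j) in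
    let d := edist A_i A_j in
    let P := cos (alpha i) * sin (alpha j) - cos (alpha j) * sin (alpha i) in
    (exists p q, ext_tangent_pts (c i) (r i) (c j) (r j) p q) /\
    (exists x y, on_circle (c i) (r i) x /\ on_geodesic A_i A_j x /\
                 on_circle (c j) (r j) y /\ on_geodesic A_i A_j y) /\
    (forall p q x y,
       ext_tangent_pts (c i) (r i) (c j) (r j) p q ->
       on_circle (c i) (r i) x -> on_geodesic A_i A_j x ->
       on_circle (c j) (r j) y -> on_geodesic A_i A_j y ->
       edist p q = sqrt (1 - r i) * sqrt (1 - r j) * d /\
       edist p q = exp (hdist x y / 2) * sqrt (2 * r i) * sqrt (2 * r j)) /\
    d = 2 * P.
Proof.
  intros H1 H12 H23 H34 H4 Hhoro Hdisj i j Hi Hij Hj; cbv zeta.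
  destruct (increasing4_mono alpha i j) as [Hai [Haij Haj]]; auto.
  destruct (Hhoro i) as [Hri [Hdi Hci]]; [lia |].
  destruct (Hhoro j) as [Hrj [Hdj Hcj]]; [lia |].
  assert (Hmeet := Hdisj i j ltac:(lia) ltac:(lia) ltac:(lia)).
  rewrite (horocycle_center _ _ (r i) (idealpt_unit _) ltac:(lra) Hdi Hci) in Hmeet |- *.
  rewrite (horocycle_center _ _ (r j) (idealpt_unit _) ltac:(lra) Hdj Hcj) in Hmeet |- *.
  destruct (horocycle_pair (alpha i) (alpha j) (r i) (r j) ltac:(lra) Hri Hrj Hmeet)
    as [Htangent [Hfeet Hlengths]].
  split; [exact Htangent | split; [exact Hfeet | split; [exact Hlengths |]]].
  rewrite edist_idealpt, Rabs_pos_eq, sin_minus; [ring | apply sin_ge_0; lra].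
Qed.
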